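(* For every channel $\mathcal{N}\in\mathrm{CPTP}(A\to B)$, with $R$ a replica of $A$, $$\log|B|-D_{\max}(\mathcal{N}\,\|\,\mathcal{R})=\min_{\psi\in\mathrm{Pure}(RA)}H_{\min}(B|R)_{\mathcal{N}^{A\to B}(\psi^{RA})},$$ where $D_{\max}(\mathcal{N}\|\mathcal{R})=\log\min\{t\ge0: t\mathcal{R}-\mathcal{N}\text{ is completely positive}\}$, $\mathcal{R}=\mathcal{R}^{A\to B}$ is the uniform channel $\rho\mapsto\mathrm{Tr}[\rho]\mathbf{u}^B$, and for a bipartite state $\rho^{RB}$, $H_{\min}(B|R)_\rho=-D_{\max}(\rho^{RB}\|\rho^R\otimes I^B)$ with $D_{\max}(\rho\|\sigma)=\log\min\{t: t\sigma\ge\rho\}$.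
   Context: Systems are finite-dimensional, $\mathbf{u}^B=I^B/|B|$, $\log$ base 2; $\mathrm{Pure}(RA)$ is the set of pure states on $RA$; $\mathcal{N}^{A\to B}(\psi^{RA})$ means $(\mathrm{id}^R\otimes\mathcal{N})(\psi^{RA})$. *)

From HB Require Import structures.
From mathcomp Require Import all_boot all_order all_algebra.
From mathcomp Require Import all_classical all_reals all_analysis.
From mathcomp Require Import complex mxtens.

Set Implicit Arguments.
Unset Strict Implicit.
Unset Printing Implicit Defensive.

Import Order.TTheory GRing.Theory Num.Theory.
Local Open Scope ring_scope.
Local Open Scope classical_set_scope.

Section QuantumDefs.
Variable R : realType.
Local Notation C := (R[i]).

Definition log2 (x : R) : R := ln x / ln 2.

Definition adjmx {m n} (A : 'M[C]_(m, n)) : 'M[C]_(n, m) := (map_mx Num.conj A)^T.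

(* positive semidefinite: v^* A v >= 0 for every vector v (order of C: real and >= 0) *)
Definition psd {n} (A : 'M[C]_n) : Prop :=
  forall v : 'cV[C]_n, 0 <= (adjmx v *m A *m v) 0 0.

Definition loewner_le {n} (A B : 'M[C]_n) : Prop := psd (B - A).

Definition pure_state {n} (psi : 'M[C]_n) : Prop :=
  exists v : 'cV[C]_n, adjmx v *m v = 1 /\ psi = v *m adjmx v.

(* block (i,j) of an operator on R (dim k) tensor A (dim a); index (i,r) <-> mxtens_index (i,r) *)
Definition blockmx {k a} (X : 'M[C]_(k * a)) (i j : 'I_k) : 'M[C]_a :=
  \matrix_(r, s) X (mxtens_index (i, r)) (mxtens_index (j, s)).

(* (id^R (dim k) tensor N) applied to X = sum_{ij} |i><j| (x) X_ij *)
Definition id_tens {k a b} (N : 'M[C]_a -> 'M[C]_b) (X : 'M[C]_(k * a)) : 'M[C]_(k * b) :=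
  \sum_(i < k) \sum_(j < k) (delta_mx i j *t N (blockmx X i j)).

Definition positive_map {a b} (N : 'M[C]_a -> 'M[C]_b) : Prop :=
  forall X, psd X -> psd (N X).

Definition completely_positive {a b} (N : 'M[C]_a -> 'M[C]_b) : Prop :=
  forall k : nat, positive_map (@id_tens k a b N).

Definition trace_preserving {a b} (N : 'M[C]_a -> 'M[C]_b) : Prop :=
  forall X, \tr (N X) = \tr X.

Definition unif_channel {a b} (X : 'M[C]_a) : 'M[C]_b :=
  (\tr X / b%:R) *: 1%:M.

Definition Dmax_channel {a b} (N : 'M[C]_a -> 'M[C]_b) : R :=
  log2 (inf [set t : R | 0 <= t /\
         completely_positive (fun X => (t%:C)%C *: (@unif_channel a b X) - N X)]).

Definition Dmax_state {n} (rho sigma : 'M[C]_n) : R :=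
  log2 (inf [set t : R | loewner_le rho ((t%:C)%C *: sigma)]).

Definition ptrace2 {k b} (rho : 'M[C]_(k * b)) : 'M[C]_k :=
  \matrix_(i, j) \sum_(l < b) rho (mxtens_index (i, l)) (mxtens_index (j, l)).

Definition Hmin {k b} (rho : 'M[C]_(k * b)) : R :=
  - Dmax_state rho (ptrace2 rho *t (1%:M : 'M[C]_b)).

End QuantumDefs.

(* If t R - N is completely positive, applying id (x) (t R - N) to a state psi^RA gives
   rho^RB <= (t / |B|) rho^R (x) I^B, because the uniform channel sees each block of psi only
   through its trace; hence |B| 2^(-H_min(B|R)_rho) <= 2^(D_max(N || R)) for every input.
   For the maximally entangled state Phi one has rho^R = I / |A|, so rho_Phi <= s rho^R (x) I^B
   says that the Choi matrix of |B| s R - N is positive semidefinite.  By Choi's theorem,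
   proved from the spectral decomposition of the input, that map is then completely positive,
   and the bound is attained at Phi. *)

From HB Require Import structures.
From mathcomp Require Import all_boot all_order all_algebra.
From mathcomp Require Import all_classical all_reals all_analysis.
From mathcomp Require Import complex mxtens.
From mathcomp Require Import ring lra.
Import Order.TTheory GRing.Theory Num.Theory.
Local Open Scope ring_scope.

Set Implicit Arguments.
Unset Strict Implicit.
Unset Printing Implicit Defensive.

Section Quantum.
Variable R : realType.
Local Notation C := (R[i]).

Definition mxform n (A : 'M[C]_n) (u w : 'cV[C]_n) : C := (adjmx u *m A *m w) 0 0.

Lemma mxformE n (A : 'M[C]_n) u w :
  mxform A u w = \sum_x \sum_y (u x 0)^* * A x y * w y 0.
Proof.
rewrite /mxform mxE; under eq_bigr => y _ do rewrite mxE big_distrl /=.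
by rewrite exchange_big; apply: eq_bigr => x _; apply: eq_bigr => y _; rewrite !mxE.
Qed.

Lemma mxform_delta n (A : 'M[C]_n) x y : mxform A (delta_mx x 0) (delta_mx y 0) = A x y.
Proof.
rewrite mxformE (big_only1 x) // => [|x' /negbTE x'x _]; last first.
  by rewrite big1 // => y' _; rewrite !mxE x'x conjC0 !mul0r.
rewrite (big_only1 y) // => [|y' /negbTE y'y _]; last by rewrite !mxE y'y mulr0.
by rewrite !mxE !eqxx conjC1 mul1r mulr1.
Qed.

Lemma mxformBZ n c (A B : 'M[C]_n) u w :
  mxform (c *: A - B) u w = c * mxform A u w - mxform B u w.
Proof. by rewrite /mxform mulmxBr -scalemxAr mulmxBl -scalemxAl !mxE. Qed.

Lemma mxformDZ n (A : 'M[C]_n) u w c :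
  mxform A (u + c *: w) (u + c *: w) =
  mxform A u u + c * mxform A u w + c^* * mxform A w u + c^* * c * mxform A w w.
Proof.
have adjmxD (v v' : 'cV[C]_n) : adjmx (v + v') = adjmx v + adjmx v'.
  by apply/matrixP => i j; rewrite !mxE rmorphD.
have adjmxZ (v : 'cV[C]_n) : adjmx (c *: v) = c^* *: adjmx v.
  by apply/matrixP => i j; rewrite !mxE rmorphM.
have entryD (P Q : 'M[C]_1) : (P + Q) 0 0 = P 0 0 + Q 0 0 by rewrite mxE.
have entryZ d (P : 'M[C]_1) : (d *: P) 0 0 = d * P 0 0 by rewrite mxE.
rewrite /mxform adjmxD adjmxZ !mulmxDl !mulmxDr -!scalemxAl -!scalemxAr.
by rewrite !entryD !entryZ; ring.
Qed.

Lemma psd_mxtrace_ge0 n (A : 'M[C]_n) : psd A -> 0 <= \tr A.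
Proof. by move=> psdA; apply: sumr_ge0 => x _; rewrite -mxform_delta; apply: psdA. Qed.

Lemma loewner_le_mxtrace n (A B : 'M[C]_n) : loewner_le A B -> \tr A <= \tr B.
Proof. by move=> /psd_mxtrace_ge0; rewrite linearB /= subr_ge0. Qed.

Lemma conjC_of_real_addB (a b : C) :
  a + b \is Num.real -> 'i * (a - b) \is Num.real -> b = a^*.
Proof.
move=> /CrealP sum_real /CrealP diff_real.
have e1 : a^* + b^* = a + b by rewrite -rmorphD.
have e2 : - 'i * (a^* - b^*) = 'i * (a - b) by rewrite -conjCi -rmorphB -rmorphM.
apply: (canRL conjCK); apply: (@mulfI _ (2%:R * 'i)).
  by rewrite mulf_neq0 ?neq0Ci ?pnatr_eq0.
have -> : 2%:R * 'i * b^* = 'i * (a^* + b^*) + - 'i * (a^* - b^*) by ring.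
by rewrite e1 e2; ring.
Qed.

Lemma psd_hermitian n (X : 'M[C]_n) : psd X -> forall x y, X y x = (X x y)^*.
Proof.
move=> psdX x y; have real_form v : mxform X v v \is Num.real by exact/ger0_real/psdX.
have form_xy c : mxform X (delta_mx x 0 + c *: delta_mx y 0) (delta_mx x 0 + c *: delta_mx y 0)
    = X x x + c * X x y + c^* * X y x + c^* * c * X y y.
  by rewrite mxformDZ !mxform_delta.
have real_xx := real_form (delta_mx x 0); have real_yy := real_form (delta_mx y 0).
rewrite !mxform_delta in real_xx real_yy.
apply: conjC_of_real_addB.
  have := real_form (delta_mx x 0 + 1 *: delta_mx y 0); rewrite form_xy conjC1 !mul1r.
  have -> : X x y + X y x = X x x + X x y + X y x + X y y - X x x - X y y by ring.
  by move=> ?; rewrite !rpredB.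
have := real_form (delta_mx x 0 + 'i *: delta_mx y 0); rewrite form_xy conjCi.
have -> : 'i * (X x y - X y x)
    = X x x + 'i * X x y + - 'i * X y x + - 'i * 'i * X y y - X x x - X y y.
  have sqrNi : - 'i * 'i = 1 :> C by rewrite mulNr -expr2 sqrCi opprK.
  by rewrite sqrNi; ring.
by move=> ?; rewrite !rpredB.
Qed.

Local Open Scope sesquilinear_scope.

Lemma psd_spectral n (X : 'M[C]_n) : psd X ->
  exists (q : 'I_n -> 'cV[C]_n) (d : 'I_n -> C), (forall l, 0 <= d l) /\
    (forall x y, X x y = \sum_l q l x 0 * d l * (q l y 0)^*).
Proof.
move=> psdX; have hermX : X ^t* = X.
  by apply/matrixP => x y; rewrite !mxE (psd_hermitian psdX x y) conjCK.
have /orthomx_spectralP specX : X \is normalmx by apply/normalmxP; rewrite hermX.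
have unitP := spectral_unitarymx X; rewrite invmx_unitary // in specX.
exists (fun l => (row l (spectralmx X))^t* ), (fun l => spectral_diag X 0 l); split => [l|x y].
  have adj_tc (A : 'M[C]_n) : adjmx (A ^t* ) = A by apply/matrixP => i j; rewrite !mxE conjCK.
  have := psdX ((spectralmx X)^t* *m delta_mx l 0).
  rewrite /adjmx map_mxM trmx_mul -/(adjmx _) -/(adjmx _) adj_tc {2}specX !mulmxA !mulmxtVK //.
  by rewrite -/(mxform _ _ _) mxform_delta mxE eqxx mulr1n.
rewrite {1}specX mxE; apply: eq_bigr => l _.
by rewrite mul_mx_diag !mxE conjCK mulrAC.
Qed.

Lemma mul_le_of_sqr_le (F : numDomainType) (p q T : F) :
  0 <= p -> 0 <= q -> p ^+ 2 <= T -> q ^+ 2 <= T -> p * q <= T.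
Proof.
move=> p_ge0 q_ge0 pT qT.
have /orP[pq|qp] := real_leVge (ger0_real p_ge0) (ger0_real q_ge0).
  by apply: le_trans qT; rewrite expr2 ler_wpM2r.
by apply: le_trans pT; rewrite expr2 ler_wpM2l.
Qed.

Lemma psd_le_scalar n (Y : 'M[C]_n) : psd Y -> exists K : R, loewner_le Y ((K%:C)%C *: 1%:M).
Proof.
move=> psdY; pose K : C := \sum_x \sum_y `|Y x y|.
have K_real : K \is Num.real by apply/ger0_real/sumr_ge0 => x _; apply: sumr_ge0.
exists (complex.Re K) => v; rewrite -/(mxform _ v v) mxformBZ RRe_real // subr_ge0.
set T := \sum_z `|v z 0| ^+ 2.
have T_form : mxform 1%:M v v = T.
  rewrite mxformE; apply: eq_bigr => z _; rewrite (big_only1 z) // => [|z' z'z _].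
    by rewrite mxE eqxx mulr1 normCKC.
  by rewrite mxE eq_sym (negbTE z'z) mulr0 mul0r.
have sqr_le_T z : `|v z 0| ^+ 2 <= T.
  by rewrite /T (bigD1 z) //= lerDl sumr_ge0 // => ? _; rewrite exprn_ge0.
rewrite T_form; apply: le_trans (real_ler_norm (ger0_real (psdY v))) _.
rewrite -/(mxform _ _ _) mxformE /K mulr_suml; apply: le_trans (ler_norm_sum _ _ _) _.
apply: ler_sum => x _; rewrite mulr_suml; apply: le_trans (ler_norm_sum _ _ _) _.
apply: ler_sum => y _; rewrite !normrM norm_conjC mulrAC mulrC.
by apply: ler_wpM2l => //; apply: mul_le_of_sqr_le.
Qed.

Lemma sum_mxtens_index (V : nmodType) k b (F : 'I_(k * b) -> V) :
  \sum_x F x = \sum_i \sum_r F (mxtens_index (i, r)).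
Proof.
rewrite pair_big /=; apply: reindex => /=.
by exists (@mxtens_unindex k b) => x _; rewrite (mxtens_indexK, mxtens_unindexK) //; case: x.
Qed.

Lemma id_tensE k a b (N : 'M[C]_a -> 'M[C]_b) (X : 'M[C]_(k * a)) i j r s :
  id_tens N X (mxtens_index (i, r)) (mxtens_index (j, s)) = N (blockmx X i j) r s.
Proof.
rewrite /id_tens summxE (big_only1 i) // => [|i' /negbTE i'i _]; last first.
  by rewrite summxE big1 // => j' _; rewrite tensmxE mxE eq_sym i'i mul0r.
rewrite summxE (big_only1 j) // => [|j' /negbTE j'j _].
  by rewrite tensmxE mxE !eqxx mul1r.
by rewrite tensmxE mxE eq_sym j'j andbF mul0r.
Qed.

Lemma mxtrace_blocks k a (X : 'M[C]_(k * a)) : \tr X = \sum_i \tr (blockmx X i i).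
Proof.
rewrite /mxtrace sum_mxtens_index; apply: eq_bigr => i _.
by apply: eq_bigr => r _; rewrite mxE.
Qed.

Lemma mxtrace_ptrace2 k b (Y : 'M[C]_(k * b)) : \tr (ptrace2 Y) = \tr Y.
Proof. by rewrite /mxtrace sum_mxtens_index; apply: eq_bigr => i _; rewrite mxE. Qed.

Lemma mxtrace_tens1 k b (A : 'M[C]_k) : \tr (A *t (1%:M : 'M[C]_b)) = \tr A * b%:R.
Proof.
rewrite /mxtrace sum_mxtens_index mulr_suml; apply: eq_bigr => i _.
under eq_bigr do rewrite tensmxE mxE eqxx mulr1.
by rewrite sumr_const card_ord mulr_natr.
Qed.

Section TracePreserving.
Variables (a b : nat) (N : 'M[C]_a -> 'M[C]_b).
Hypothesis N_tp : trace_preserving N.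

Lemma ptrace2_id_tens k (X : 'M[C]_(k * a)) i j :
  ptrace2 (id_tens N X) i j = \tr (blockmx X i j).
Proof. by rewrite mxE -N_tp; apply: eq_bigr => r _; rewrite id_tensE. Qed.

Lemma mxtrace_id_tens k (X : 'M[C]_(k * a)) : \tr (id_tens N X) = \tr X.
Proof.
rewrite -mxtrace_ptrace2 [RHS]mxtrace_blocks {1}/mxtrace.
by apply: eq_bigr => i _; apply: ptrace2_id_tens.
Qed.

Lemma id_tens_unif_sub k (t : R) (X : 'M[C]_(k * a)) :
  id_tens (fun Y => (t%:C)%C *: unif_channel Y - N Y) X =
  (((t / b%:R)%:C)%C *: (ptrace2 (id_tens N X) *t (1%:M : 'M[C]_b))) - id_tens N X.
Proof.
apply/matrixP => x y.
case: (mxtens_indexP x) => i r; case: (mxtens_indexP y) => j s.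
rewrite id_tensE !mxE !mxtens_indexK /=; under eq_bigr do rewrite id_tensE.
rewrite -N_tp /mxtrace rmorphM fmorphV rmorph_nat /= id_tensE; ring.
Qed.

End TracePreserving.

Lemma pure_state_psd n (psi : 'M[C]_n) : pure_state psi -> psd psi.
Proof.
move=> [v [_ ->]] w.
rewrite !mulmxA -mulmxA mxE big_ord1.
have -> : (adjmx v *m w) 0 0 = ((adjmx w *m v) 0 0)^*.
  by rewrite !mxE rmorph_sum; apply: eq_bigr => x _; rewrite !mxE rmorphM /= conjCK mulrC.
by rewrite mul_conjC_ge0.
Qed.

Lemma mxtrace_pure_state n (psi : 'M[C]_n) : pure_state psi -> \tr psi = 1.
Proof. by move=> [v [v_unit ->]]; rewrite mxtrace_mulC v_unit mxtrace1. Qed.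

Lemma mxtrace_delta a (r s : 'I_a) : \tr (delta_mx r s : 'M[C]_a) = (r == s)%:R.
Proof.
rewrite /mxtrace (big_only1 r) // => [|x /negbTE xr _]; first by rewrite mxE eqxx.
by rewrite mxE xr.
Qed.

Definition maxent_vec a : 'cV[C]_(a * a) :=
  \col_x (((mxtens_unindex x).1 == (mxtens_unindex x).2)%:R
          * ((Num.sqrt (a%:R^-1 : R))%:C)%C).

Definition maxent a : 'M[C]_(a * a) := maxent_vec a *m adjmx (maxent_vec a).

Lemma maxent_block a r s : blockmx (maxent a) r s = a%:R^-1 *: delta_mx r s.
Proof.
set c : C := ((Num.sqrt (a%:R^-1 : R))%:C)%C.
have sqr_c : c * c^* = a%:R^-1.
  have c_real : c \is Num.real by apply: ger0_real; rewrite ler0c sqrtr_ge0.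
  rewrite conj_Creal // -rmorphM -expr2 sqr_sqrtr ?invr_ge0 ?ler0n //.
  by rewrite fmorphV rmorph_nat.
apply/matrixP => u v; rewrite !mxE big_ord1 !mxE !mxtens_indexK /= rmorphM rmorph_nat.
by rewrite mulrACA sqr_c mulrC -natrM -mulnb [u == r]eq_sym [v == s]eq_sym.
Qed.

Lemma maxent_pure a : (0 < a)%N -> pure_state (maxent a).
Proof.
move=> a_gt0; exists (maxent_vec a); split => //.
apply/matrixP => i j; rewrite !ord1 [RHS]mxE eqxx.
have -> : (adjmx (maxent_vec a) *m maxent_vec a) 0 0 = \tr (maxent a).
  by rewrite mxtrace_mulC /mxtrace big_ord1.
rewrite mxtrace_blocks; under eq_bigr do rewrite maxent_block mxtraceZ mxtrace_delta eqxx mulr1.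
by rewrite sumr_const card_ord -[LHS]mulr_natr mulVf // pnatr_eq0 -lt0n.
Qed.

Section Choi.
Variables (a b : nat) (M : 'M[C]_a -> 'M[C]_b).
Hypothesis M_linear : linear M.
HB.instance Definition _ := GRing.isLinear.Build C _ _ _ M M_linear.

Lemma linear_blockmxE k (X : 'M[C]_(k * a)) i j u v :
  M (blockmx X i j) u v = \sum_r \sum_s
    X (mxtens_index (i, r)) (mxtens_index (j, s)) * M (delta_mx r s) u v.
Proof.
rewrite {1}[blockmx X i j]matrix_sum_delta linear_sum summxE; apply: eq_bigr => r _.
by rewrite linear_sum summxE; apply: eq_bigr => s _; rewrite linearZ !mxE.
Qed.

(* [choi_form z] is [z^* J z] for the Choi matrix
   [J = \sum_(r, s) delta_mx r s *t M (delta_mx r s)]. *)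
Definition choi_form (z : 'cV[C]_(a * b)) : C :=
  \sum_r \sum_u \sum_s \sum_v
    (z (mxtens_index (r, u)) 0)^* * M (delta_mx r s) u v * z (mxtens_index (s, v)) 0.

Lemma mxform_id_tens_maxent z :
  mxform (id_tens M (maxent a)) z z = a%:R^-1 * choi_form z.
Proof.
rewrite mxformE sum_mxtens_index /choi_form mulr_sumr; apply: eq_bigr => r _.
rewrite mulr_sumr; apply: eq_bigr => u _; rewrite sum_mxtens_index mulr_sumr.
apply: eq_bigr => s _; rewrite mulr_sumr; apply: eq_bigr => v _.
by rewrite id_tensE maxent_block linearZ mxE; ring.
Qed.

(* Contracting the reference factor turns the form of [id_tens M (p p^* )] at [w]
   into the Choi form at [pcontract p w]. *)
Definition pcontract k (p : 'cV[C]_(k * a)) (w : 'cV[C]_(k * b)) : 'cV[C]_(a * b) :=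
  \col_x \sum_j (p (mxtens_index (j, (mxtens_unindex x).1)) 0)^*
                * w (mxtens_index (j, (mxtens_unindex x).2)) 0.

Lemma mxform_id_tens_decomp k (X : 'M[C]_(k * a)) (q : 'I_(k * a) -> 'cV[C]_(k * a))
    (d : 'I_(k * a) -> C) w :
  (forall x y, X x y = \sum_l q l x 0 * d l * (q l y 0)^*) ->
  mxform (id_tens M X) w w = \sum_l d l * choi_form (pcontract (q l) w).
Proof.
move=> X_decomp.
pose F l i u j v r s := q l (mxtens_index (i, r)) 0 * d l * (q l (mxtens_index (j, s)) 0)^*
  * (w (mxtens_index (i, u)) 0)^* * M (delta_mx r s) u v * w (mxtens_index (j, v)) 0.
transitivity (\sum_i \sum_u \sum_j \sum_v \sum_r \sum_s \sum_l F l i u j v r s).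
  rewrite mxformE sum_mxtens_index; apply: eq_bigr => i _; apply: eq_bigr => u _.
  rewrite sum_mxtens_index; apply: eq_bigr => j _; apply: eq_bigr => v _.
  rewrite id_tensE linear_blockmxE mulr_sumr mulr_suml; apply: eq_bigr => r _.
  rewrite mulr_sumr mulr_suml; apply: eq_bigr => s _.
  by rewrite X_decomp mulr_suml mulr_sumr mulr_suml; apply: eq_bigr => l _; rewrite /F; ring.
transitivity (\sum_l \sum_r \sum_u \sum_s \sum_v \sum_i \sum_j F l i u j v r s); last first.
  apply: eq_bigr => l _; rewrite /choi_form mulr_sumr; apply: eq_bigr => r _.
  rewrite mulr_sumr; apply: eq_bigr => u _; rewrite mulr_sumr; apply: eq_bigr => s _.
  rewrite mulr_sumr; apply: eq_bigr => v _; rewrite !mxE !mxtens_indexK /= rmorph_sum.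
  rewrite !mulr_suml mulr_sumr; apply: eq_bigr => i _.
  rewrite !mulr_sumr; apply: eq_bigr => j _; rewrite rmorphM /= conjCK /F; ring.
rewrite !pair_big /=.
pose perm (p : 'I_(k * a) * 'I_a * 'I_b * 'I_a * 'I_b * 'I_k * 'I_k) :=
  let: (l, r, u, s, v, i, j) := p in (i, u, j, v, r, s, l).
pose unperm (p : 'I_k * 'I_b * 'I_k * 'I_b * 'I_a * 'I_a * 'I_(k * a)) :=
  let: (i, u, j, v, r, s, l) := p in (l, r, u, s, v, i, j).
rewrite (reindex perm) /=; last first.
  by exists unperm; case=> [[[[[[? ?] ?] ?] ?] ?] ?] ?.
by apply: eq_bigr => [[[[[[[l r] u] s] v] i] j]] _.
Qed.

Theorem choi_cp : (0 < a)%N -> psd (id_tens M (maxent a)) -> completely_positive M.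
Proof.
move=> a_gt0 psd_choi k X psdX w.
have [q [d [d_ge0 X_decomp]]] := psd_spectral psdX.
rewrite -/(mxform _ w w) (mxform_id_tens_decomp w X_decomp).
apply: sumr_ge0 => l _; apply: mulr_ge0 => //.
have := psd_choi (pcontract (q l) w).
by rewrite -/(mxform _ _ _) mxform_id_tens_maxent pmulr_rge0 // invr_gt0 ltr0n.
Qed.

End Choi.

Local Open Scope classical_set_scope.

Definition cp_bounds a b (N : 'M[C]_a -> 'M[C]_b) : set R :=
  [set t | 0 <= t /\ completely_positive (fun X => (t%:C)%C *: unif_channel X - N X)].

Definition cond_bounds k b (rho : 'M[C]_(k * b)) : set R :=
  [set t | loewner_le rho ((t%:C)%C *: (ptrace2 rho *t (1%:M : 'M[C]_b)))].

Lemma Dmax_channelE a b (N : 'M[C]_a -> 'M[C]_b) :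
  Dmax_channel N = log2 (inf (cp_bounds N)).
Proof. by []. Qed.

Lemma HminE k b (rho : 'M[C]_(k * b)) : Hmin rho = - log2 (inf (cond_bounds rho)).
Proof. by []. Qed.

Lemma inf_scale_le (S1 S2 : set R) c : 0 < c ->
  (forall t, S1 t -> S2 (t / c)) -> has_lbound S2 -> S1 !=set0 -> c * inf S2 <= inf S1.
Proof.
move=> c_gt0 S12 lbS2 S1_neq0; apply: lb_le_inf => // t S1t.
by rewrite mulrC -ler_pdivlMr //; apply: ge_inf => //; apply: S12.
Qed.

Lemma inf_scale_ge (S1 S2 : set R) c : 0 < c ->
  (forall s, S2 s -> S1 (c * s)) -> has_lbound S1 -> S2 !=set0 -> inf S1 <= c * inf S2.
Proof.
move=> c_gt0 S21 lbS1 S2_neq0; rewrite mulrC -ler_pdivrMr //.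
by apply: lb_le_inf => // s S2s; rewrite ler_pdivrMr // mulrC; apply: ge_inf => //; apply: S21.
Qed.

Section Bounds.
Variables (a b : nat) (N : 'M[C]_a -> 'M[C]_b).
Hypotheses (a_gt0 : (0 < a)%N) (b_gt0 : (0 < b)%N).
Hypotheses (N_linear : linear N) (N_cp : completely_positive N) (N_tp : trace_preserving N).

Lemma cp_bounds_cond_bounds k (X : 'M[C]_(k * a)) t :
  psd X -> cp_bounds N t -> cond_bounds (id_tens N X) (t / b%:R).
Proof.
by move=> psdX [_ cpt]; rewrite /cond_bounds /loewner_le /= -id_tens_unif_sub //; apply: cpt.
Qed.

Lemma cond_bounds_ge k (X : 'M[C]_(k * a)) s :
  \tr X = 1 -> cond_bounds (id_tens N X) s -> b%:R^-1 <= s.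
Proof.
move=> trX /loewner_le_mxtrace; rewrite mxtraceZ mxtrace_tens1 mxtrace_ptrace2.
rewrite mxtrace_id_tens // trX mul1r.
have -> : (s%:C)%C * b%:R = ((s * b%:R)%:C)%C by rewrite rmorphM rmorph_nat.
have -> : (1 : C) = ((1 : R)%:C)%C by rewrite rmorph1.
by rewrite lecR -div1r ler_pdivrMr ?ltr0n.
Qed.

Lemma cond_bounds_maxent_cp_bounds s :
  cond_bounds (id_tens N (maxent a)) s -> cp_bounds N (b%:R * s).
Proof.
move=> bound_s; split.
  rewrite mulr_ge0 ?ler0n // (le_trans _ (cond_bounds_ge _ bound_s)) ?invr_ge0 ?ler0n //.
  exact/mxtrace_pure_state/maxent_pure.
apply: choi_cp => //.
  move=> c X Y /=; rewrite /unif_channel mxtraceD mxtraceZ N_linear.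
  by apply/matrixP => i j; rewrite !mxE; ring.
rewrite (id_tens_unif_sub N_tp).
have -> : b%:R * s / b%:R = s by rewrite mulrAC divff ?mul1r // pnatr_eq0 -lt0n.
exact: bound_s.
Qed.

Lemma cond_bounds_maxent_neq0 : cond_bounds (id_tens N (maxent a)) !=set0.
Proof.
have psd_rho : psd (id_tens N (maxent a)) by apply/N_cp/pure_state_psd/maxent_pure.
have [K rho_le] := psd_le_scalar psd_rho.
have marginal : ptrace2 (id_tens N (maxent a)) *t (1%:M : 'M[C]_b) = a%:R^-1 *: 1%:M.
  apply/matrixP => x y.
  case: (mxtens_indexP x) => r u; case: (mxtens_indexP y) => s v.
  rewrite tensmxE ptrace2_id_tens // maxent_block mxtraceZ mxtrace_delta !mxE.
  rewrite (inj_eq (can_inj (@mxtens_indexK _ _))) xpair_eqE.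
  by case: eqP => _; case: eqP => _ /=; rewrite ?mulr1 ?mulr0 ?mul0r.
exists (a%:R * K); rewrite /cond_bounds /= marginal scalerA rmorphM rmorph_nat /=.
by rewrite mulrAC mulfV ?mul1r // pnatr_eq0 -lt0n.
Qed.

Lemma cp_bounds_neq0 : cp_bounds N !=set0.
Proof.
have [s bound_s] := cond_bounds_maxent_neq0.
by exists (b%:R * s); apply: cond_bounds_maxent_cp_bounds.
Qed.

Section PureInput.
Variables (psi : 'M[C]_(a * a)) (psi_pure : pure_state psi).

Let cond_bounds_psi_neq0 : cond_bounds (id_tens N psi) !=set0.
Proof.
have [t cp_t] := cp_bounds_neq0.
by exists (t / b%:R); apply: cp_bounds_cond_bounds => //; apply: pure_state_psd.
Qed.

Let cond_bounds_psi_ge s : cond_bounds (id_tens N psi) s -> b%:R^-1 <= s.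
Proof. exact/cond_bounds_ge/mxtrace_pure_state. Qed.

Lemma inf_cond_bounds_gt0 : 0 < inf (cond_bounds (id_tens N psi)).
Proof.
apply: lt_le_trans (lb_le_inf cond_bounds_psi_neq0 cond_bounds_psi_ge).
by rewrite invr_gt0 ltr0n.
Qed.

Lemma inf_cond_bounds_le : b%:R * inf (cond_bounds (id_tens N psi)) <= inf (cp_bounds N).
Proof.
apply: inf_scale_le.
- by rewrite ltr0n.
- by move=> t; apply: cp_bounds_cond_bounds; apply: pure_state_psd.
- by exists b%:R^-1 => s; apply: cond_bounds_psi_ge.
- exact: cp_bounds_neq0.
Qed.

End PureInput.

Lemma inf_cp_bounds_maxent :
  inf (cp_bounds N) = b%:R * inf (cond_bounds (id_tens N (maxent a))).
Proof.
apply/eqP; rewrite eq_le (inf_cond_bounds_le (maxent_pure a_gt0)) andbT.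
apply: inf_scale_ge.
- by rewrite ltr0n.
- exact: cond_bounds_maxent_cp_bounds.
- by exists 0 => t [].
- exact: cond_bounds_maxent_neq0.
Qed.

End Bounds.

Lemma log2M (x y : R) : 0 < x -> 0 < y -> log2 (x * y) = log2 x + log2 y.
Proof. by move=> x_gt0 y_gt0; rewrite /log2 lnM ?posrE // mulrDl. Qed.

Lemma ler_log2 (x y : R) : 0 < x -> x <= y -> log2 x <= log2 y.
Proof.
move=> x_gt0 xy; rewrite /log2 ler_pM2r ?invr_gt0 ?ln_gt0 ?ltr1n //.
by rewrite ler_ln ?posrE // (lt_le_trans x_gt0 xy).
Qed.

End Quantum.

Arguments maxent {R} a.
Arguments maxent_pure {R a}.

Theorem mainTheorem13 (R : realType) (dA dB : nat)
  (N : 'M[R[i]]_dA -> 'M[R[i]]_dB) :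
  (0 < dA)%N -> (0 < dB)%N ->
  linear N -> completely_positive N -> trace_preserving N ->
  (exists psi : 'M[R[i]]_(dA * dA), pure_state psi /\
     log2 (dB%:R : R) - Dmax_channel N = Hmin (@id_tens _ dA dA dB N psi)) /\
  (forall psi : 'M[R[i]]_(dA * dA), pure_state psi ->
     log2 (dB%:R : R) - Dmax_channel N <= Hmin (@id_tens _ dA dA dB N psi)).
Proof.
move=> dA_gt0 dB_gt0 N_linear N_cp N_tp; have dB_pos : 0 < dB%:R :> R by rewrite ltr0n.
have inf_gt0 := inf_cond_bounds_gt0 dA_gt0 dB_gt0 N_linear N_cp N_tp.
have inf_le := inf_cond_bounds_le dA_gt0 dB_gt0 N_linear N_cp N_tp.
rewrite Dmax_channelE; split => [|psi psi_pure].
  have maxent_dA : pure_state (maxent dA : 'M[R[i]]_(dA * dA)) := maxent_pure dA_gt0.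
  exists (maxent dA); split => //.
  rewrite HminE (inf_cp_bounds_maxent dA_gt0 dB_gt0 N_linear N_cp N_tp).
  by rewrite (log2M dB_pos (inf_gt0 _ maxent_dA)); ring.
have := ler_log2 (mulr_gt0 dB_pos (inf_gt0 _ psi_pure)) (inf_le _ psi_pure).
by rewrite HminE (log2M dB_pos (inf_gt0 _ psi_pure)); lra.
Qed.
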